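(* For all integers $m,n\ge0$ and $p\ge0$, $$\sum_{k=0}^{m}s(m,k)\,\mathcal{B}_{n+k,p}=\sum_{k=0}^{n}S_m(n+m,k+m)\binom{m+k+p}{p}^{-1}.$$
   Context: $s(m,k)$ are the signed Stirling numbers of the first kind, defined by $x(x-1)\cdots(x-m+1)=\sum_{k=0}^m s(m,k)x^k$. $S_r(n,k)$ denotes the $r$-Stirling numbers of the second kind (number of partitions of an $n$-set into $k$ nonempty blocks such that the first $r$ elements lie in distinct blocks); they satisfy $\sum_{n\ge k}S_r(n+r,k+r)\frac{z^n}{n!}=\frac{1}{k!}e^{rz}(e^z-1)^k$. For an integer $p\ge0$, the $p$-Bell numbers $\mathcal{B}_{n,p}$ are defined by $\sum_{n\ge0}\mathcal{B}_{n,p}\frac{z^n}{n!}=\sum_{n\ge0}\binom{n+p}{p}^{-1}\frac{(e^z-1)^n}{n!}$. *)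

From mathcomp Require Import all_boot all_order all_algebra.
Set Implicit Arguments. Unset Strict Implicit. Unset Printing Implicit Defensive.
Import GRing.Theory Num.Theory.
Local Open Scope ring_scope.

(* Signed Stirling numbers of the first kind, via the defining identity
   x(x-1)...(x-m+1) = sum_k s(m,k) x^k, i.e. s(m,k) is the k-th coefficient
   of the falling-factorial polynomial. *)
Definition falling_poly (m : nat) : {poly int} :=
  \prod_(i < m) ('X - (i%:Z)%:P).
Definition stirling1 (m k : nat) : int := (falling_poly m)`_k.

(* r-Stirling numbers of the second kind: number of partitions of an n-set
   (here 'I_n) into k nonempty blocks such that the first r elements
   (0, ..., r-1) lie in distinct blocks. *)
Definition rstirling2 (r n k : nat) : nat :=
  #|[set P : {set {set 'I_n}} |
      [&& partition P [set: 'I_n], #|P| == k &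
          [forall i : 'I_n, forall j : 'I_n,
             ((i < r)%N && (j < r)%N && (i != j)) ==> (pblock P i != pblock P j)]]]|.

(* p-Bell numbers: n! times the coefficient of z^n in
   sum_j binom(j+p,p)^{-1} (e^z-1)^j/j!.  Since (e^z-1)^j/j! has
   n!-normalised coefficients S_0(n,j) (the r = 0 case of the EGF of the
   r-Stirling numbers), this is the finite sum below (S_0(n,j)=0 for j>n). *)
Definition pbell (n p : nat) : rat :=
  \sum_(j < n.+1) (rstirling2 0 n j)%:R / ('C(j + p, p))%:R.

(* Let S(D, R, j) count the partitions of a finite set D into j blocks that
   separate the points of R, a subset of D; the r-Stirling number S_r(N, j) is
   S('I_N, {0, ..., r-1}, j).  For x in D outside R, such a partition either
   also separates x from R, or puts x into the block of exactly one y in R, and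
   deleting x is then a bijection onto the partitions of D :\ x separating R.
   Hence S_m(N+1, j) = S_(m+1)(N+1, j) + m S_m(N, j), which matches the
   recurrence s(m+1, k+1) = s(m, k) - m s(m, k+1) of the Stirling numbers of
   the first kind, and induction on m gives
     S_m(n+m, j) = sum_k s(m, k) S_0(n+k, j).
   Dividing by binom(j+p, p) and summing over j gives the theorem, because
   S_m(n+m, j) = 0 for j < m and S_0(n+k, j) = 0 for j > n+k. *)

From mathcomp Require Import all_boot all_order all_algebra.
Import GRing.Theory Num.Theory.
Set Implicit Arguments. Unset Strict Implicit. Unset Printing Implicit Defensive.

Lemma card_set_sum (I : finType) (p : pred I) : #|[set i | p i]| = \sum_i (p i : nat).
Proof. by rewrite -sum1dep_card big_mkcond. Qed.

Section RPartitions.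
Variable T : finType.
Implicit Types (D R : {set T}) (P Q : {set {set T}}).

Definition separates P R :=
  [forall i in R, forall j in R, (i != j) ==> (pblock P i != pblock P j)].

Definition rpartition D R k P := [&& partition P D, #|P| == k & separates P R].

Definition rstirling D R k := #|[set P | rpartition D R k P]|.

Lemma separatesP P R : reflect {in R &, injective (pblock P)} (separates P R).
Proof.
apply: (iffP forall_inP) => [sepP i j iR jR | injP i iR].
  by move/eqP; apply: contraTeq => ij; move/forall_inP/(_ j jR): (sepP i iR); rewrite ij.
by apply/forall_inP => j jR; apply/implyP; apply: contra => /eqP/injP->.
Qed.

Lemma partition_eq_pblock P D a b : partition P D -> a \in D ->
  (pblock P a == pblock P b) = (b \in pblock P a).
Proof.
by move=> pP aD; rewrite eq_pblock ?(partition_trivIset pP) ?(cover_partition pP).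
Qed.

Lemma pblock_preim_partition (rT : eqType) (f : T -> rT) D : {in D &, forall a b,
  (pblock (preim_partition f D) a == pblock (preim_partition f D) b) = (f a == f b)}.
Proof.
move=> a b aD bD; rewrite (partition_eq_pblock _ (preim_partitionP f D)) //.
by rewrite pblock_equivalence_partition //; split=> // /eqP->.
Qed.

Lemma eq_in_preim_partition (rT rT' : eqType) (f : T -> rT) (g : T -> rT') D :
    {in D &, forall a b, (f a == f b) = (g a == g b)} ->
  preim_partition f D = preim_partition g D.
Proof.
move=> fg; apply: eq_in_imset => a aD; apply/setP => b; rewrite !inE.
by case bD: (b \in D); rewrite //= fg.
Qed.

Lemma card_preim_partition (rT : finType) (f : T -> rT) D :
  #|preim_partition f D| = #|f @: D|.
Proof.
rewrite /preim_partition /equivalence_partition.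
have -> : [set [set b in D | f a == f b] | a in D] =
          [set [set b in D | v == f b] | v in f @: D] by rewrite -imset_comp.
apply: card_in_imset => _ _ /imsetP[a aD ->] /imsetP[b bD ->] /setP/(_ a).
by rewrite !inE aD eqxx => /esym/eqP.
Qed.

Lemma card_partition_pblock P D : partition P D -> #|P| = #|pblock P @: D|.
Proof. by move=> pP; rewrite -card_preim_partition preim_partition_pblock. Qed.

Lemma rpartition_card_le D R k P : rpartition D R k P -> (k <= #|D|)%N.
Proof.
case/and3P=> pP /eqP <- _; rewrite (card_partition pP) -sum1_card.
by apply: leq_sum => B BP; rewrite card_gt0 (partition_neq0 pP BP).
Qed.

Lemma rpartition_card_ge D R k P :
  R \subset D -> rpartition D R k P -> (#|R| <= k)%N.
Proof.
move=> RD /and3P[pP /eqP <- /separatesP injP].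
rewrite -(card_in_imset injP); apply/subset_leq_card/subsetP => _ /imsetP[i iR ->].
by rewrite pblock_mem // (cover_partition pP) (subsetP RD).
Qed.

Lemma rstirling_gt_card D R k : (#|D| < k)%N -> rstirling D R k = 0%N.
Proof.
move=> ltDk; apply: eq_card0 => P; rewrite inE.
by apply/negP => /rpartition_card_le; rewrite leqNgt ltDk.
Qed.

Lemma rstirling_lt_card D R k : R \subset D -> (k < #|R|)%N -> rstirling D R k = 0%N.
Proof.
move=> RD ltkR; apply: eq_card0 => P; rewrite inE.
by apply/negP => /(rpartition_card_ge RD); rewrite leqNgt ltkR.
Qed.

Section DeletePoint.
Variables (D R : {set T}) (x : T) (k : nat).
Hypotheses (RD : R \subset D) (xD : x \in D) (xR : x \notin R).

Let D' := D :\ x.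
Let pull y a := if a == x then y else a.
Let restrict P := preim_partition (pblock P) D'.
Let insert y Q := preim_partition (fun a => pblock Q (pull y a)) D.

Let RD' : R \subset D'.
Proof.
apply/subsetP => a aR; rewrite !inE (subsetP RD) // andbT.
by apply: contraNneq xR => <-.
Qed.

Let D'D : D' \subset D.
Proof. exact: subsetDl. Qed.

Let pullE y a : a \in D' -> pull y a = a.
Proof. by rewrite !inE /pull => /andP[/negbTE->]. Qed.

Let imset_pull y : y \in D' -> pull y @: D = D'.
Proof.
move=> yD'; apply/setP => a; apply/imsetP/idP => [[b bD ->] | aD'].
  by rewrite /pull; case: eqP => // /eqP bx; rewrite !inE bx.
by exists a; rewrite ?pullE // (subsetP D'D).
Qed.

Section JoinBlock.
Variables (y : T) (yR : y \in R).

Let yD' : y \in D'. Proof. exact: subsetP RD' y yR. Qed.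

Let pullD' a : a \in D -> pull y a \in D'.
Proof. by move=> aD; rewrite -(imset_pull yD') imset_f. Qed.

Lemma rpartition_restrict P : rpartition D R k P -> y \in pblock P x ->
  rpartition D' R k (restrict P) /\ insert y (restrict P) = P.
Proof.
case/and3P=> pP /eqP cP /separatesP injP yPx.
have pblock_pull a : pblock P (pull y a) = pblock P a.
  by rewrite /pull; case: eqP => // ->; apply: same_pblock (partition_trivIset pP) yPx.
have eq_restrict : {in D' &, forall a b,
    (pblock (restrict P) a == pblock (restrict P) b) = (pblock P a == pblock P b)}.
  exact: pblock_preim_partition.
split.
  apply/and3P; split; first exact: preim_partitionP.
    rewrite card_preim_partition -(imset_pull yD') -imset_comp -cP.
    by rewrite (card_partition_pblock pP) (eq_imset _ pblock_pull).
  apply/separatesP => i j iR jR /eqP.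
  by rewrite eq_restrict ?(subsetP RD') // => /eqP/injP->.
rewrite -[RHS](preim_partition_pblock pP).
apply: eq_in_preim_partition => a b aD bD.
by rewrite eq_restrict ?pullD' // !pblock_pull.
Qed.

Lemma rpartition_insert Q : rpartition D' R k Q ->
  [/\ rpartition D R k (insert y Q), y \in pblock (insert y Q) x
    & restrict (insert y Q) = Q].
Proof.
case/and3P=> pQ /eqP cQ /separatesP injQ.
have pI := preim_partitionP (fun a => pblock Q (pull y a)) D.
have eq_insert : {in D &, forall a b,
    (pblock (insert y Q) a == pblock (insert y Q) b) =
    (pblock Q (pull y a) == pblock Q (pull y b))}.
  exact: pblock_preim_partition.
have [yD pull_x] : y \in D /\ pull y x = y by rewrite /pull eqxx (subsetP D'D).
split.
- apply/and3P; split=> //.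
    rewrite card_preim_partition imset_comp imset_pull //.
    by rewrite -cQ (card_partition_pblock pQ).
  apply/separatesP => i j iR jR /eqP.
  have [iD' jD'] := (subsetP RD' i iR, subsetP RD' j jR).
  by rewrite eq_insert ?(subsetP D'D) // !pullE // => /eqP; apply: injQ.
- by rewrite -(partition_eq_pblock _ pI xD) eq_insert // pull_x pullE.
rewrite -[RHS](preim_partition_pblock pQ).
apply: eq_in_preim_partition => a b aD' bD'.
by rewrite eq_insert ?(subsetP D'D) // !pullE.
Qed.

Lemma card_rpartition_pblock :
  #|[set P | rpartition D R k P & y \in pblock P x]| = rstirling D' R k.
Proof.
have restrictK : {in [set P | rpartition D R k P & y \in pblock P x],
    cancel restrict (insert y)}.
  by move=> P; rewrite inE => /andP[rP /(rpartition_restrict rP)[]].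
rewrite -(card_in_imset (can_in_inj restrictK)); apply: eq_card => Q; rewrite inE.
apply/imsetP/idP => [[P] | rQ].
  by rewrite inE => /andP[rP /(rpartition_restrict rP)[? _]] ->.
have [rI yI /esym insertK] := rpartition_insert rQ.
by exists (insert y Q); rewrite // inE rI.
Qed.

End JoinBlock.

Lemma separates_setU1 P : partition P D ->
  separates P (x |: R) = separates P R && [disjoint R & pblock P x].
Proof.
move=> pP; apply/separatesP/andP => [injP | [/separatesP injP disjRx]].
  split.
    by apply/separatesP => i j iR jR; apply: injP; rewrite !inE ?iR ?jR orbT.
  apply/pred0P => y /=; apply/negbTE/negP => /andP[yR yPx].
  have xy : x = y.
    apply: injP; rewrite ?setU11 ?setU1r //.
    by rewrite (same_pblock (partition_trivIset pP) yPx).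
  by move: xR; rewrite xy yR.
have xblock j : j \in R -> pblock P x != pblock P j.
  by move=> jR; rewrite (partition_eq_pblock _ pP xD) (disjointFr disjRx jR).
move=> i j /setU1P[->|iR] /setU1P[->|jR] //.
- by move/eqP; rewrite (negbTE (xblock j jR)).
- by move/esym/eqP; rewrite (negbTE (xblock i iR)).
- exact: injP.
Qed.

Lemma card_separated_pblock P : partition P D -> separates P R ->
  (#|R :&: pblock P x| <= 1)%N.
Proof.
move=> /partition_trivIset tiP /separatesP injP; apply/card_le1_eqP => i j.
rewrite !inE => /andP[iR iPx] /andP[jR jPx].
by apply: injP; rewrite // (same_pblock tiP iPx) (same_pblock tiP jPx).
Qed.

Lemma rpartition_setU1 P : rpartition D R k P = rpartition D (x |: R) k P
  + \sum_(y in R) (rpartition D R k P && (y \in pblock P x)) :> nat.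
Proof.
have [/and3P[pP cP sepP] | nrP] := boolP (rpartition D R k P); last first.
  rewrite big1 // addn0; suff /negbTE-> : ~~ rpartition D (x |: R) k P by [].
  apply: contra nrP.
  by case/and3P=> pP cP; rewrite separates_setU1 // /rpartition pP cP => /andP[->].
rewrite /rpartition pP cP separates_setU1 // sepP /=.
have -> : \sum_(y in R) (y \in pblock P x : nat) = #|R :&: pblock P x|.
  by rewrite -sum1_card -big_mkcondr; apply: eq_bigl => y; rewrite inE.
rewrite -setI_eq0 -cards_eq0.
by case: #|_| (card_separated_pblock pP sepP) => [|[]].
Qed.

Lemma rstirling_setU1 :
  rstirling D R k = rstirling D (x |: R) k + #|R| * rstirling D' R k.
Proof.
rewrite /rstirling !card_set_sum.
rewrite (eq_bigr _ (fun P _ => rpartition_setU1 P)) big_split /=; congr (_ + _).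
rewrite exchange_big /= -sum_nat_const; apply: eq_bigr => y yR.
by rewrite -!card_set_sum card_rpartition_pblock.
Qed.
End DeletePoint.

End RPartitions.

Section Transport.
Variables (T T' : finType) (h : T -> T') (h_inj : injective h).
Implicit Types (D R : {set T}) (P : {set {set T}}).

Let himset P : {set {set T'}} := [set h @: (B : {set T}) | B in P].

Lemma pblock_imset P D a : partition P D -> a \in D ->
  pblock (himset P) (h a) = h @: pblock P a.
Proof.
move=> pP aD; apply: def_pblock.
- by rewrite imset_trivIset // (partition_trivIset pP).
- by rewrite imset_f // pblock_mem // (cover_partition pP).
- by rewrite imset_f // mem_pblock (cover_partition pP).
Qed.

Lemma rpartition_imset D R k P : R \subset D ->
  rpartition (h @: D) (h @: R) k (himset P) = rpartition D R k P.
Proof.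
move=> RD; rewrite /rpartition imset_partition //.
have [pP|] //= := boolP (partition P D).
rewrite card_imset; last exact: imset_inj.
have blockE i : i \in R -> pblock (himset P) (h i) = h @: pblock P i.
  by move=> iR; rewrite (pblock_imset pP) ?(subsetP RD).
congr (_ && _); apply/separatesP/separatesP => injP.
  by move=> i j iR jR eqij; apply/h_inj/injP; rewrite ?imset_f // !blockE // eqij.
move=> _ _ /imsetP[i iR ->] /imsetP[j jR ->]; rewrite !blockE //.
by move/(imset_inj h_inj)/injP->.
Qed.

Let imset_preimset (B : {set T'}) D : B \subset h @: D -> h @: (h @^-1: B) = B.
Proof.
move=> BD; apply/setP => b; apply/imsetP/idP => [[a] | bB]; first by rewrite inE => ? ->.
have /imsetP[a _ bE] := subsetP BD b bB.
by exists a; rewrite // inE -bE.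
Qed.

Lemma rstirling_imset D R k : R \subset D ->
  rstirling (h @: D) (h @: R) k = rstirling D R k.
Proof.
move=> RD; rewrite /rstirling -(card_imset _ (imset_inj (imset_inj h_inj))).
apply: eq_card => P'; rewrite inE; apply/idP/imsetP => [rP' | [P]]; last first.
  by rewrite inE => rP ->; rewrite rpartition_imset.
have pP' : partition P' (h @: D) by case/and3P: rP'.
have preimK : himset [set h @^-1: (B : {set T'}) | B in P'] = P'.
  rewrite /himset -imset_comp -[RHS]imset_id; apply: eq_in_imset => B BP' /=.
  exact: imset_preimset (partitionS pP' BP').
exists [set h @^-1: (B : {set T'}) | B in P'] => //.
by rewrite inE -(rpartition_imset _ _ RD) preimK.
Qed.

End Transport.

Definition ord_prefix n r : {set 'I_n} := [set i : 'I_n | (i < r)%N].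

Lemma card_ord_prefix n r : (r <= n)%N -> #|ord_prefix n r| = r.
Proof.
move=> le_rn; have -> : ord_prefix n r = widen_ord le_rn @: [set: 'I_r].
  apply/setP => i; rewrite inE; apply/idP/imsetP => [ltir | [j _ ->]].
    by exists (Ordinal ltir); last exact: val_inj.
  exact: (ltn_ord j).
by rewrite card_imset ?cardsT ?card_ord // => a b /(congr1 val) /= /val_inj.
Qed.

Lemma rstirling2E r n k : rstirling2 r n k = rstirling [set: 'I_n] (ord_prefix n r) k.
Proof.
apply: eq_card => P; rewrite !inE; congr [&& _, _ & _].
apply/forallP/separatesP => [sepP i j | injP i].
  rewrite !inE => ltir ltjr /eqP; apply: contraTeq => ij.
  by move/forallP/(_ j)/implyP: (sepP i); rewrite ltir ltjr ij; apply.
apply/forallP => j; apply/implyP => /andP[/andP[ltir ltjr] ij].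
by apply: contra ij => /eqP eqij; apply/eqP/injP; rewrite ?inE.
Qed.

Lemma rstirling2S m N j : (m <= N)%N ->
  rstirling2 m N.+1 j = (rstirling2 m.+1 N.+1 j + m * rstirling2 m N j)%N.
Proof.
rewrite -ltnS => lt_mN1; pose x := Ordinal lt_mN1.
have xR : x \notin ord_prefix N.+1 m by rewrite inE ltnn.
have prefixS : x |: ord_prefix N.+1 m = ord_prefix N.+1 m.+1.
  by apply/setP => i; rewrite !inE ltnS [in RHS]leq_eqVlt -val_eqE.
have setT_lift : [set: 'I_N.+1] :\ x = lift x @: [set: 'I_N].
  apply/setP => a; rewrite !inE andbT; apply/idP/imsetP => [ax | [i _ ->]].
    by case: (unliftP x a) => [i ->|ax0]; [exists i | rewrite ax0 eqxx in ax].
  by rewrite eq_sym neq_lift.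
have prefix_lift : ord_prefix N.+1 m = lift x @: ord_prefix N m.
  apply/setP => a; rewrite inE; apply/idP/imsetP => [ltam | [i]].
    have ax : a != x by rewrite -val_eqE /= neq_ltn ltam.
    case: (unliftP x a) => [i aE|ax0]; last by rewrite ax0 eqxx in ax.
    exists i; rewrite // inE; move: ltam; rewrite aE.
    exact: leq_ltn_trans (leq_addl _ _).
  by rewrite inE => + ->; rewrite /= /bump; case: leqP => // le_mi; rewrite ltnNge le_mi.
rewrite !rstirling2E (rstirling_setU1 j (subsetT (ord_prefix N.+1 m)) (in_setT x) xR).
rewrite prefixS card_ord_prefix ?(ltnW lt_mN1) // setT_lift prefix_lift.
by rewrite rstirling_imset //; exact: lift_inj.
Qed.

Local Open Scope ring_scope.

Lemma falling_polyS m : falling_poly m.+1 = falling_poly m * ('X - (m%:Z)%:P).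
Proof. by rewrite /falling_poly big_ord_recr. Qed.

Lemma stirling1_00 : stirling1 0 0 = 1.
Proof. by rewrite /stirling1 /falling_poly big_ord0 coef1. Qed.

Lemma stirling1S0 m : stirling1 m.+1 0 = - m%:Z * stirling1 m 0.
Proof.
by rewrite /stirling1 falling_polyS mulrBr coefB coefMX coefMC sub0r mulrC mulNr.
Qed.

Lemma stirling1SS m k :
  stirling1 m.+1 k.+1 = stirling1 m k - m%:Z * stirling1 m k.+1.
Proof. by rewrite /stirling1 falling_polyS mulrBr coefB coefMX coefMC mulrC. Qed.

Lemma stirling1_eq0 m k : (m < k)%N -> stirling1 m k = 0.
Proof.
elim: m k => [|m IHm] [|k] //; first by rewrite /stirling1 /falling_poly big_ord0 coef1.
by rewrite ltnS => lt_mk; rewrite stirling1SS !IHm ?mulr0 ?subr0 // ltnW.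
Qed.

Lemma stirling1_sumS m (F : nat -> int) :
  \sum_(k < m.+2) stirling1 m.+1 k * F k =
  \sum_(k < m.+1) stirling1 m k * F k.+1 - m%:Z * \sum_(k < m.+1) stirling1 m k * F k.
Proof.
have sum_last : \sum_(k < m.+1) stirling1 m k.+1 * F k.+1 =
                \sum_(k < m) stirling1 m k.+1 * F k.+1.
  by rewrite big_ord_recr /= stirling1_eq0 // mul0r addr0.
have sum_recl (G : nat -> int) n : \sum_(k < n.+1) G k = G 0%N + \sum_(k < n) G k.+1.
  by rewrite big_ord_recl.
rewrite (sum_recl (fun k => stirling1 m.+1 k * F k)) stirling1S0.
rewrite (sum_recl (fun k => stirling1 m k * F k)).
under eq_bigr do rewrite stirling1SS mulrBl -mulrA.
rewrite big_split /= sumrN -mulr_sumr sum_last.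
by rewrite mulrDr opprD addrCA !mulNr mulrA.
Qed.

Lemma rstirling2_stirling1 m n j :
  (rstirling2 m (n + m) j)%:Z =
  \sum_(k < m.+1) stirling1 m k * (rstirling2 0 (n + k) j)%:Z.
Proof.
elim: m n => [|m IHm] n; first by rewrite big_ord1 stirling1_00 mul1r addn0.
rewrite (stirling1_sumS m (fun k => (rstirling2 0 (n + k) j)%:Z)).
under eq_bigr do rewrite addnS -addSn.
rewrite -!IHm addSn addnS (rstirling2S j (leq_addl n m)).
by rewrite PoszD PoszM addrK.
Qed.

Lemma rstirling2_stirling1_ring (R : pzRingType) m n j :
  (rstirling2 m (n + m) j)%:R =
  \sum_(k < m.+1) (stirling1 m k)%:~R * (rstirling2 0 (n + k) j)%:R :> R.
Proof.
rewrite -[LHS]/((rstirling2 m (n + m) j)%:Z%:~R) rstirling2_stirling1 rmorph_sum.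
by apply: eq_bigr => k _; rewrite rmorphM.
Qed.

Lemma pbell_widen N p M : (N < M)%N ->
  pbell N p = \sum_(j < M) (rstirling2 0 N j)%:R / ('C(j + p, p))%:R.
Proof.
move=> lt_NM; rewrite /pbell.
rewrite (big_ord_widen M (fun j => (rstirling2 0 N j)%:R / ('C(j + p, p))%:R : rat) lt_NM).
rewrite big_mkcond /=; apply: eq_bigr => j _; case: ltnP => // lt_Nj.
by rewrite rstirling2E rstirling_gt_card ?mul0r // cardsT card_ord.
Qed.

Theorem mainTheorem2 (m n p : nat) :
  \sum_(k < m.+1) ((stirling1 m k)%:~R * pbell (n + k) p : rat)
  = \sum_(k < n.+1) (rstirling2 m (n + m) (k + m))%:R / ('C(m + k + p, p))%:R.
Proof.
have widen (k : 'I_m.+1) : pbell (n + k) p =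
    \sum_(j < m + n.+1) (rstirling2 0 (n + k) j)%:R / ('C(j + p, p))%:R.
  by apply: pbell_widen; rewrite addnS ltnS addnC leq_add2r -ltnS.
under eq_bigr do rewrite widen mulr_sumr.
rewrite exchange_big /=.
under eq_bigr do
  rewrite (eq_bigr _ (fun k _ => mulrA _ _ _)) -mulr_suml -rstirling2_stirling1_ring.
rewrite big_split_ord /= big1 ?add0r.
  by apply: eq_bigr => k _; rewrite [X in rstirling2 _ _ X]addnC.
move=> j _.
by rewrite rstirling2E rstirling_lt_card ?mul0r ?subsetT ?card_ord_prefix ?leq_addl.
Qed.
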